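(* Let $K$ be a field of characteristic $0$ and let $(A_i,\omega_i)$, $i=1,2$, be baric $K$-algebras of countable dimension, with $\nu_i=\dim_K A_i$. Then $A_1\bowtie A_2$ is associative if and only if $(A_i,\omega_i)\cong(K^{\bowtie\nu_i},\operatorname{id}_K^{\bowtie\nu_i})$ for $i=1,2$. In that case $(A_1\bowtie A_2,\omega_1\bowtie\omega_2)\cong(K^{\bowtie\nu},\operatorname{id}_K^{\bowtie\nu})$ with $\nu=\nu_1+\nu_2$.
   Context: A baric algebra over a field $K$ is a pair $(A,\omega)$ where $A$ is a (not necessarily associative) $K$-algebra and $\omega:A\to K$ is a nonzero $K$-algebra homomorphism; two baric algebras $(A,\omega),(B,\varphi)$ are isomorphic if there is an algebra isomorphism $f:A\to B$ with $\varphi\circ f=\omega$. For baric algebras $(A_1,\omega_1),(A_2,\omega_2)$, $A_1\bowtie A_2$ is the vector space $A_1\oplus A_2$ with product $(a_1,a_2)(b_1,b_2)=(a_1b_1+\omega_2(b_2)a_1,\ a_2b_2+\omega_1(b_1)a_2)$ and weight $\omega_1\bowtie\omega_2(a_1,a_2)=\omega_1(a_1)+\omega_2(a_2)$. For a cardinal $1\le\nu\le\aleph_0$, $K^{\bowtie\nu}$ is the $K$-vector space of finitely supported families $(\alpha_i)_{i<\nu}$ in $K$ with product $(\alpha_i)(\beta_i)=\big(\sum_i\beta_i\big)(\alpha_i)$ and weight $\operatorname{id}_K^{\bowtie\nu}((\alpha_i))=\sum_i\alpha_i$ (for finite $\nu$ this is the iterated $\bowtie$-construction of $\nu$ copies of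 $(K,\operatorname{id}_K)$). *)

From HB Require Import structures.
From mathcomp Require Import all_boot all_order all_algebra.
Set Implicit Arguments. Unset Strict Implicit. Unset Printing Implicit Defensive.
Import Order.TTheory GRing.Theory Num.Theory.
Local Open Scope ring_scope.

(* Cardinals 1 <= nu <= aleph_0 (Fin 0 is allowed syntactically but is
   excluded in the theorem by the nonzero weight). *)
Inductive cnum := Fin of nat | Aleph0.

Definition cadd (a b : cnum) : cnum :=
  match a, b with Fin m, Fin n => Fin (m + n)%N | _, _ => Aleph0 end.

Definition in_idx (nu : cnum) (i : nat) : bool :=
  match nu with Fin n => (i < n)%N | Aleph0 => true end.

Definition bilinear_mul (K : fieldType) (A : lmodType K) (mul : A -> A -> A) :=
  (forall (k : K) (a b c : A), mul (k *: a + b) c = k *: mul a c + mul b c) /\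
  (forall (k : K) (a b c : A), mul c (k *: a + b) = k *: mul c a + mul c b).

Definition is_weight (K : fieldType) (A : lmodType K) (mul : A -> A -> A)
    (omega : A -> K) :=
  [/\ forall (k : K) (a b : A), omega (k *: a + b) = k * omega a + omega b,
      forall a b : A, omega (mul a b) = omega a * omega b
    & exists a : A, omega a != 0].

Definition associative_mul (T : Type) (mul : T -> T -> T) :=
  forall a b c : T, mul (mul a b) c = mul a (mul b c).

Definition has_dim (K : fieldType) (A : lmodType K) (nu : cnum) :=
  exists e : nat -> A,
    (forall a : A, exists (N : nat) (c : nat -> K),
        a = \sum_(i < N | in_idx nu i) c i *: e i) /\
    (forall (N : nat) (c : nat -> K),
        \sum_(i < N | in_idx nu i) c i *: e i = 0 ->
        forall i : nat, (i < N)%N -> in_idx nu i -> c i = 0).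

Definition baric_iso (K : fieldType) (A B : lmodType K)
    (mulA : A -> A -> A) (wA : A -> K) (mulB : B -> B -> B) (wB : B -> K) :=
  exists f : A -> B,
    [/\ bijective f,
        forall (k : K) (a b : A), f (k *: a + b) = k *: f a + f b,
        forall a b : A, f (mulA a b) = mulB (f a) (f b)
      & forall a : A, wB (f a) = wA a].

Definition bow_mul (K : fieldType) (A1 A2 : lmodType K)
    (mul1 : A1 -> A1 -> A1) (w1 : A1 -> K)
    (mul2 : A2 -> A2 -> A2) (w2 : A2 -> K) (x y : A1 * A2) : A1 * A2 :=
  (mul1 x.1 y.1 + w2 y.2 *: x.1, mul2 x.2 y.2 + w1 y.1 *: x.2).

Definition bow_weight (K : fieldType) (A1 A2 : lmodType K)
    (w1 : A1 -> K) (w2 : A2 -> K) (x : A1 * A2) : K := w1 x.1 + w2 x.2.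

(* K^{bowtie nu}: finitely supported families (alpha_i)_{i<nu}.
   For finite nu = n these are row vectors 'rV_n; for nu = aleph_0 they are
   coefficient sequences of polynomials (finitely supported families indexed
   by nat). *)
Definition Kbow (K : fieldType) (nu : cnum) : lmodType K :=
  match nu with Fin n => 'rV[K]_n | Aleph0 => {poly K} end.

Definition Kweight (K : fieldType) (nu : cnum) : Kbow K nu -> K :=
  match nu as nu0 return Kbow K nu0 -> K with
  | Fin n => fun v : 'rV[K]_n => \sum_(i < n) v ord0 i
  | Aleph0 => fun p : {poly K} => \sum_(i < size p) p`_i
  end.

Definition Kmul (K : fieldType) (nu : cnum) (x y : Kbow K nu) : Kbow K nu :=
  Kweight y *: x.

(* The key observation is that a baric algebra (A, w) of dimension nu is
   isomorphic to K^{bowtie nu} exactly when its product is a b = w(b) a.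
   Indeed any isomorphism transports this product; conversely, take any linear
   isomorphism phi : K^{bowtie nu} -> A (both have bases indexed by {i < nu})
   and precompose it with a transvection psi making w o phi o psi equal to the
   sum of entries, since any two nonzero linear forms differ by an
   automorphism.  Then:
   - associativity of A1 bowtie A2, tested on (a,0), (0,y2), (b,0) with
     w2(y2) = 1 (and symmetrically), forces a b = w_i(b) a in each A_i;
   - conversely products a b = w(b) a are associative and stable under bowtie;
   - A1 * A2 has a basis indexed by a set in bijection with {i < nu1 + nu2}. *)

From HB Require Import structures.
From mathcomp Require Import all_boot all_order all_algebra.
From mathcomp Require Import zify ring.
Set Implicit Arguments. Unset Strict Implicit. Unset Printing Implicit Defensive.
Import Order.TTheory GRing.Theory Num.Theory.
Local Open Scope ring_scope.

Lemma inj_surj_bijective (T : choiceType) (U : eqType) (f : T -> U) :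
  injective f -> (forall a, exists x, f x = a) -> bijective f.
Proof.
move=> injf surjf.
have surjf' a : exists x, f x == a by have [x <-] := surjf a; exists x.
exists (fun a => xchoose (surjf' a)) => [x|a]; last exact/eqP/(xchooseP (surjf' a)).
by apply: injf; apply/eqP/(xchooseP (surjf' (f x))).
Qed.

Section LinearMaps.
Variable K : fieldType.
Implicit Types U V : lmodType K.

Lemma lin0 U V (f : U -> V) : linear f -> f 0 = 0.
Proof.
by move=> lf; have := lf (-1) 0 0; rewrite scaleN1r oppr0 addr0 scaleN1r addNr.
Qed.

Lemma linZ U V (f : U -> V) k a : linear f -> f (k *: a) = k *: f a.
Proof. by move=> lf; have := lf k a 0; rewrite !addr0 (lin0 lf) addr0. Qed.

Lemma linD U V (f : U -> V) a b : linear f -> f (a + b) = f a + f b.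
Proof. by move=> lf; have := lf 1 a b; rewrite !scale1r. Qed.

Lemma scal0 U (f : U -> K) : scalar f -> f 0 = 0.
Proof. exact: (@lin0 U K^o). Qed.

Lemma scalZ U (f : U -> K) k a : scalar f -> f (k *: a) = k * f a.
Proof. exact: (@linZ U K^o). Qed.

Lemma scalD U (f : U -> K) a b : scalar f -> f (a + b) = f a + f b.
Proof. exact: (@linD U K^o). Qed.

Definition linear_iso U V (f : U -> V) := linear f /\ bijective f.

Lemma linear_can U V (f : U -> V) (g : V -> U) :
  linear f -> cancel f g -> cancel g f -> linear g.
Proof. by move=> lf fK gK k a b; apply: (can_inj fK); rewrite lf !gK. Qed.
End LinearMaps.

(* The transvection [shear s t d] : y |-> y + ((s y - t y) / t d) d moves the
   linear form t onto s; [shear t s d] undoes it when s d and t d are nonzero. *)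
Section Shear.
Variables (K : fieldType) (V : lmodType K).

Definition shear (s t : V -> K) (d y : V) : V := y + ((s y - t y) / t d) *: d.

Variables (s t : V -> K) (d : V).
Hypotheses (ss : scalar s) (st : scalar t) (sd : s d != 0) (td : t d != 0).

Lemma shear_linear : linear (shear s t d).
Proof.
have sc : scalar (fun y => (s y - t y) / t d) by move=> k a b; rewrite ss st; ring.
by move=> k a b; rewrite /shear sc scalerDl scalerDr scalerA addrACA.
Qed.

Lemma shear_transport y : t (shear s t d y) = s y.
Proof. by rewrite scalD // scalZ // divfK // addrC subrK. Qed.

Lemma shearK : cancel (shear s t d) (shear t s d).
Proof.
move=> y; set z := shear s t d y.
have sz : s z = s y + (s y - t y) / t d * s d by rewrite scalD // scalZ.
rewrite {1}/shear shear_transport sz opprD addrA subrr add0r mulNr mulfK //.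
by rewrite scaleNr /z /shear addrK.
Qed.
End Shear.

(* Any two nonzero linear forms on a vector space differ by a linear
   automorphism: shear along a vector on which neither form vanishes. *)
Section FormsConjugate.
Variables (K : fieldType) (V : lmodType K) (s t : V -> K).
Hypotheses (ss : scalar s) (st : scalar t).

Lemma common_nonroot : (exists u, s u != 0) -> (exists v, t v != 0) ->
  exists d, s d != 0 /\ t d != 0.
Proof.
move=> [u su] [v tv].
have [sv|] := eqVneq (s v) 0; last by exists v.
have [tu|] := eqVneq (t u) 0; last by exists u.
by exists (u + v); rewrite !scalD // sv tu addr0 add0r.
Qed.

Lemma forms_conjugate : (exists u, s u != 0) -> (exists v, t v != 0) ->
  exists psi : V -> V, linear_iso psi /\ forall y, t (psi y) = s y.
Proof.
move=> s_nz t_nz; have [d [sd td]] := common_nonroot s_nz t_nz.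
exists (shear s t d); split; last exact: shear_transport.
split; first exact: shear_linear.
by exists (shear t s d); apply: shearK.
Qed.
End FormsConjugate.

Section KbowCoordinates.
Variable K : fieldType.

Definition Kcoord (nu : cnum) : Kbow K nu -> nat -> K :=
  match nu as nu0 return Kbow K nu0 -> nat -> K with
  | Fin n => fun (v : 'rV[K]_n) i =>
      if @insub _ (fun i => i < n)%N 'I_n i is Some j then v ord0 j else 0
  | Aleph0 => fun (p : {poly K}) i => p`_i
  end.

Definition Kbound (nu : cnum) : Kbow K nu -> nat :=
  match nu as nu0 return Kbow K nu0 -> nat with
  | Fin n => fun _ => n
  | Aleph0 => fun (p : {poly K}) => size p
  end.

Lemma Kcoord_linear nu k (x y : Kbow K nu) i :
  Kcoord (k *: x + y) i = k * Kcoord x i + Kcoord y i.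
Proof.
case: nu x y => [n|] x y /=; last by rewrite coefD coefZ.
by case: insub => [j|]; rewrite ?mxE ?mulr0 ?addr0.
Qed.

Lemma Kcoord_bound nu (x : Kbow K nu) i : (Kbound x <= i)%N -> Kcoord x i = 0.
Proof.
case: nu x => [n|] x /= hi; last exact: nth_default.
by rewrite insubF // ltnNge hi.
Qed.

Lemma Kbound_idx nu (x : Kbow K nu) i : (i < Kbound x)%N -> in_idx nu i.
Proof. by case: nu x. Qed.

Lemma Kcoord_eq0 nu (x : Kbow K nu) :
  (forall i, (i < Kbound x)%N -> Kcoord x i = 0) -> x = 0.
Proof.
case: nu x => [n|] x /= x0.
  apply/rowP => j; rewrite mxE; have := x0 j (ltn_ord j).
  by rewrite (insubT (fun i => i < n)%N (ltn_ord j)) /= (_ : Sub _ _ = j) //; apply: val_inj.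
apply/polyP => i; rewrite coef0; case: (ltnP i (size x)) => hi; first exact: x0.
exact: nth_default.
Qed.

Lemma Kcoord_exists nu (s : seq nat) (c : nat -> K) : all (in_idx nu) s ->
  exists x : Kbow K nu, forall i, Kcoord x i = if i \in s then c i else 0.
Proof.
case: nu => [n|] /= hs.
  exists (\row_(j < n) (if val j \in s then c j else 0)) => i.
  case: insubP => [j _ <-|hin]; first by rewrite mxE.
  by case si: (i \in s) => //; move: (allP hs i si); rewrite /= (negbTE hin).
exists (\poly_(i < (\max_(j <- s) j).+1) (if i \in s then c i else 0)) => i.
rewrite coef_poly; case: ltnP => // hi; case si: (i \in s) => //.
by have := leq_bigmax_seq (F := id) i si erefl; rewrite leqNgt hi.
Qed.

Lemma Kweight_scalar nu : scalar (@Kweight K nu).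
Proof.
case: nu => [n|] k x y /=.
  by rewrite mulr_sumr -big_split /=; apply: eq_bigr => j _; rewrite !mxE.
have E (p : {poly K}) : \sum_(i < size p) p`_i = p.[1].
  by rewrite horner_coef; apply: eq_bigr => i _; rewrite expr1n mulr1.
by rewrite !E hornerD hornerZ.
Qed.

Lemma Kweight_nonzero nu (x : Kbow K nu) : x != 0 -> exists u, @Kweight K nu u != 0.
Proof.
case: nu x => [[|n]|] x /= nz.
- by move: nz; rewrite (_ : x = 0) ?eqxx //; apply/rowP => -[].
- exists (\row_(j < n.+1) (if val j == 0%N then 1 else 0)) => /=.
  rewrite big_ord_recl big1 ?addr0; first by rewrite mxE /= oner_neq0.
  by move=> j _; rewrite mxE.
- by exists 1 => /=; rewrite size_poly1 big_ord1 coefC /= oner_neq0.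
Qed.
End KbowCoordinates.

Definition seq_basis (K : fieldType) (I : eqType) (A : lmodType K)
    (e : I -> A) (P : pred I) :=
  (forall a : A, exists (s : seq I) (c : I -> K),
      [/\ uniq s, all P s & a = \sum_(i <- s) c i *: e i]) /\
  (forall (s : seq I) (c : I -> K), uniq s -> all P s ->
      \sum_(i <- s) c i *: e i = 0 -> forall i, i \in s -> c i = 0).

Lemma big_iota_mem (V : nmodType) (s : seq nat) M (F : nat -> V) :
  uniq s -> (forall i, i \in s -> (i < M)%N) ->
  \sum_(i <- iota 0 M) (if i \in s then F i else 0) = \sum_(i <- s) F i.
Proof.
move=> us sM; rewrite -big_mkcond -big_filter; apply: perm_big.
apply: uniq_perm; rewrite ?filter_uniq ?iota_uniq // => i.
by rewrite mem_filter mem_iota /= add0n; case si: (i \in s) => //=; apply: sM.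
Qed.

Lemma has_dim_seq_basis (K : fieldType) (A : lmodType K) nu : has_dim A nu ->
  exists e : nat -> A, seq_basis e (in_idx nu).
Proof.
case=> e [span free]; exists e; split.
  move=> a; have [N [c ->]] := span a.
  exists [seq i <- iota 0 N | in_idx nu i], c; split.
  - by rewrite filter_uniq ?iota_uniq.
  - by rewrite filter_all.
  - by rewrite big_filter -(big_mkord (in_idx nu) (fun i => c i *: e i)) /index_iota subn0.
move=> s c us s_idx s0 i si.
pose N := (\max_(j <- s) j).+1.
have sN j : j \in s -> (j < N)%N by move=> sj; rewrite ltnS (leq_bigmax_seq (F := id) j sj).
have := free N (fun j => if j \in s then c j else 0).
rewrite -(big_mkord (in_idx nu) (fun i => (if i \in s then c i else 0) *: e i)).
have -> : \sum_(0 <= j < N | in_idx nu j) (if j \in s then c j else 0) *: e j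
         = \sum_(j <- s) c j *: e j.
  rewrite big_mkcond -(big_iota_mem (fun j => c j *: e j) us sN).
  apply: eq_bigr => j _; case sj: (j \in s); last by rewrite scale0r if_same.
  by rewrite (allP s_idx j sj).
by move=> /(_ s0 i (sN i si) (allP s_idx i si)); rewrite si.
Qed.

Section SumBasis.
Variables (K : fieldType) (I1 I2 : eqType) (A1 A2 : lmodType K).
Variables (e1 : I1 -> A1) (e2 : I2 -> A2) (P1 : pred I1) (P2 : pred I2).

Definition sum_basis (k : I1 + I2) : A1 * A2 :=
  match k with inl i => (e1 i, 0) | inr j => (0, e2 j) end.

Definition sum_index (k : I1 + I2) : bool :=
  match k with inl i => P1 i | inr j => P2 j end.

Definition left_of (k : I1 + I2) : option I1 := if k is inl i then Some i else None.
Definition right_of (k : I1 + I2) : option I2 := if k is inr j then Some j else None.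

Lemma sum_sum_basis (s : seq (I1 + I2)) (c : I1 + I2 -> K) :
  \sum_(k <- s) c k *: sum_basis k =
  (\sum_(i <- pmap left_of s) c (inl i) *: e1 i,
   \sum_(j <- pmap right_of s) c (inr j) *: e2 j).
Proof.
rewrite [LHS]surjective_pairing !big_pmap; congr (_, _).
- rewrite (big_morph fst (id1 := 0) (op1 := +%R)) //.
  by apply: eq_bigr => -[i|j] _ //=; rewrite scaler0.
- rewrite (big_morph snd (id1 := 0) (op1 := +%R)) //.
  by apply: eq_bigr => -[i|j] _ //=; rewrite scaler0.
Qed.
Lemma left_ofK : ocancel left_of inl. Proof. by case. Qed.
Lemma right_ofK : ocancel right_of inr. Proof. by case. Qed.

Lemma seq_basis_sum : seq_basis e1 P1 -> seq_basis e2 P2 -> seq_basis sum_basis sum_index.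
Proof.
move=> [span1 free1] [span2 free2]; split.
  move=> [a1 a2]; have [s1 [c1 [u1 P1s1 ->]]] := span1 a1.
  have [s2 [c2 [u2 P2s2 ->]]] := span2 a2.
  exists (map inl s1 ++ map inr s2).
  exists (fun k => match k with inl i => c1 i | inr j => c2 j end); split.
  - rewrite cat_uniq !map_inj_uniq ?u1 ?u2 ?andbT => [|? ? []|? ? []] //.
    by apply/hasPn => _ /mapP[j _ ->]; apply/mapP => -[i _].
  - by rewrite all_cat !all_map; apply/andP.
  have left_inr s : pmap left_of (map inr s) = [::] by elim: s.
  have right_inl s : pmap right_of (map inl s) = [::] by elim: s.
  by rewrite sum_sum_basis !pmap_cat left_inr right_inl !map_pK ?cats0.
move=> s c us sP s0; have := congr1 fst s0; have := congr1 snd s0.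
rewrite sum_sum_basis /= => s02 s01 [i|j] sk.
- apply: (free1 _ (fun i => c (inl i)) _ _ s01); first by apply: (pmap_uniq left_ofK).
  + by rewrite all_pmap; apply: sub_all sP => -[].
  + by rewrite (can2_mem_pmap left_ofK).
- apply: (free2 _ (fun j => c (inr j)) _ _ s02); first by apply: (pmap_uniq right_ofK).
  + by rewrite all_pmap; apply: sub_all sP => -[].
  + by rewrite (can2_mem_pmap right_ofK).
Qed.
End SumBasis.

Section KbowIsoOfBasis.
Variables (K : fieldType) (I : eqType) (A : lmodType K) (e : I -> A) (Q : pred I).
Variables (nu : cnum) (h : nat -> I) (g : I -> nat).
Hypothesis basis : seq_basis e Q.
Hypothesis h_index : forall i, in_idx nu i -> Q (h i) /\ g (h i) = i.
Hypothesis g_index : forall j, Q j -> in_idx nu (g j) /\ h (g j) = j.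

Definition Kbow_to (x : Kbow K nu) : A :=
  \sum_(i <- iota 0 (Kbound x)) Kcoord x i *: e (h i).

Lemma Kbow_to_wide (x : Kbow K nu) M :
  (Kbound x <= M)%N -> Kbow_to x = \sum_(i <- iota 0 M) Kcoord x i *: e (h i).
Proof.
move=> xM; rewrite /Kbow_to -(subnKC xM) iotaD big_cat /= add0n.
rewrite [X in _ = _ + X]big_seq [X in _ = _ + X]big1 ?addr0 // => i.
by rewrite mem_iota => /andP[xi _]; rewrite Kcoord_bound // scale0r.
Qed.

Lemma Kbow_to_linear : linear Kbow_to.
Proof.
move=> k x y; pose M := maxn (Kbound (k *: x + y)) (maxn (Kbound x) (Kbound y)).
rewrite !(@Kbow_to_wide _ M) ?leq_max ?leqnn ?orbT //.
rewrite scaler_sumr -big_split /=; apply: eq_bigr => i _.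
by rewrite Kcoord_linear scalerDl scalerA.
Qed.

Lemma Kbow_to_inj : injective Kbow_to.
Proof.
move=> x y xy; apply/eqP; rewrite -subr_eq0; apply/eqP; set z := x - y.
have z0 : Kbow_to z = 0.
  by rewrite /z -scaleN1r addrC Kbow_to_linear scaleN1r xy addNr.
apply: Kcoord_eq0 => i iz.
have idx j : j \in iota 0 (Kbound z) -> in_idx nu j.
  by rewrite mem_iota add0n => /andP[_ /Kbound_idx].
have uh : uniq (map h (iota 0 (Kbound z))).
  rewrite map_inj_in_uniq ?iota_uniq // => a b /idx ia /idx ib hab.
  by rewrite -(h_index ia).2 -(h_index ib).2 hab.
have Qh : all Q (map h (iota 0 (Kbound z))).
  by apply/allP => j /mapP[a /idx ia ->]; exact: (h_index ia).1.
have := basis.2 _ (fun j => Kcoord z (g j)) uh Qh.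
rewrite big_map (eq_big_seq (fun i => Kcoord z i *: e (h i))); last first.
  by move=> a /idx ia; rewrite (h_index ia).2.
move=> /(_ z0 (h i)); rewrite (h_index (Kbound_idx iz)).2; apply.
by apply/mapP; exists i; rewrite ?mem_iota.
Qed.

Lemma Kbow_to_surj a : exists x, Kbow_to x = a.
Proof.
have [s [c [us Qs ->]]] := basis.1 a.
have idx : all (in_idx nu) (map g s).
  by apply/allP => j /mapP[b /(allP Qs) Qb ->]; exact: (g_index Qb).1.
have [x xc] := Kcoord_exists (fun i => c (h i)) idx; exists x.
have ug : uniq (map g s).
  rewrite map_inj_in_uniq // => b1 b2 /(allP Qs) Q1 /(allP Qs) Q2 gb.
  by rewrite -(g_index Q1).2 -(g_index Q2).2 gb.
pose M := maxn (Kbound x) (\max_(j <- map g s) j).+1.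
rewrite (@Kbow_to_wide _ M) ?leq_maxl //.
under eq_bigr => i _ do rewrite xc (fun_if (fun k => k *: e (h i))) scale0r.
rewrite big_iota_mem // => [|i gi]; last first.
  by rewrite leq_max; apply/orP; right; rewrite ltnS (leq_bigmax_seq (F := id) i gi).
by rewrite big_map; apply: eq_big_seq => b /(allP Qs) Qb; rewrite (g_index Qb).2.
Qed.

Lemma Kbow_iso_of_basis : exists phi : Kbow K nu -> A, linear_iso phi.
Proof.
exists Kbow_to; split; first exact: Kbow_to_linear.
exact: inj_surj_bijective Kbow_to_inj Kbow_to_surj.
Qed.
End KbowIsoOfBasis.

Lemma in_idx_cadd_Fin m nu i :
  in_idx (cadd (Fin m) nu) i = (i < m)%N || in_idx nu (i - m).
Proof. by case: nu => [n|] /=; [lia | rewrite orbT]. Qed.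

(* The index set of nu1 + nu2 is in bijection with the disjoint union of the
   index sets of nu1 and nu2: shift past a finite summand, interleave two
   countable ones. *)
Lemma cadd_sum_index nu1 nu2 :
  exists (h : nat -> nat + nat) (g : nat + nat -> nat),
  (forall i, in_idx (cadd nu1 nu2) i ->
     sum_index (in_idx nu1) (in_idx nu2) (h i) /\ g (h i) = i) /\
  (forall k, sum_index (in_idx nu1) (in_idx nu2) k ->
     in_idx (cadd nu1 nu2) (g k) /\ h (g k) = k).
Proof.
case: nu1 => [m|]; last case: nu2 => [n|].
- exists (fun i => if (i < m)%N then inl i else inr (i - m)%N).
  exists (fun k => match k with inl i => i | inr j => (m + j)%N end).
  split=> [i|[i|j]] /=; rewrite ?in_idx_cadd_Fin.
  + by case: (ltnP i m) => im /= idx; split=> //; lia.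
  + by move=> im; rewrite im.
  + by move=> j2; rewrite addKn j2 orbT ifF //; lia.
- exists (fun i => if (i < n)%N then inr i else inl (i - n)%N).
  exists (fun k => match k with inl i => (n + i)%N | inr j => j end).
  split=> [i|[i|j]] /=.
  + by case: (ltnP i n) => im //=; split; lia.
  + by rewrite ifF ?addKn //; lia.
  + by move=> jn; rewrite jn.
- exists (fun i => if odd i then inr i./2 else inl i./2).
  exists (fun k => match k with inl i => i.*2 | inr j => j.*2.+1 end).
  split=> [i|[i|j]] /=.
  + by case: ifP => oi /=; split; lia.
  + by rewrite odd_double doubleK.
  + by rewrite odd_double uphalf_double.
Qed.

Lemma Kbow_iso_of_dim (K : fieldType) (A : lmodType K) nu :
  has_dim A nu -> exists phi : Kbow K nu -> A, linear_iso phi.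
Proof.
by move=> /has_dim_seq_basis[e eb]; apply: (Kbow_iso_of_basis (h := id) (g := id) eb).
Qed.

Lemma Kbow_iso_of_dim_pair (K : fieldType) (A1 A2 : lmodType K) nu1 nu2 :
  has_dim A1 nu1 -> has_dim A2 nu2 ->
  exists phi : Kbow K (cadd nu1 nu2) -> A1 * A2, linear_iso phi.
Proof.
move=> /has_dim_seq_basis[e1 eb1] /has_dim_seq_basis[e2 eb2].
have [h [g [h_index g_index]]] := cadd_sum_index nu1 nu2.
exact: Kbow_iso_of_basis (seq_basis_sum eb1 eb2) h_index g_index.
Qed.

Section WeightProduct.
Variable K : fieldType.
Implicit Types A : lmodType K.

(* The product of K^{bowtie nu}: a b = w(b) a.  These are exactly the baric
   algebras isomorphic to some K^{bowtie nu}. *)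
Definition weight_product A (mul : A -> A -> A) (w : A -> K) :=
  forall a b, mul a b = w b *: a.

Lemma weight_product_assoc A (mul : A -> A -> A) w :
  scalar w -> weight_product mul w -> associative_mul mul.
Proof. by move=> sw wp a b c; rewrite !wp scalZ // scalerA mulrC. Qed.

Lemma iso_weight_product A (mul : A -> A -> A) w nu :
  baric_iso mul w (@Kmul K nu) (@Kweight K nu) -> weight_product mul w.
Proof.
case=> f [[g fK _] lf mf wf] a b; apply: (can_inj fK).
by rewrite mf /Kmul wf (linZ _ _ lf).
Qed.

(* Conversely, a product a b = w(b) a with nonzero weight w on a space of
   dimension nu is isomorphic to K^{bowtie nu}: correct a linear isomorphism
   phi by an automorphism psi so that w o phi o psi is the sum of entries. *)
Lemma weight_product_iso A (mul : A -> A -> A) w nu (phi : Kbow K nu -> A) :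
  weight_product mul w -> scalar w -> (exists a, w a != 0) -> linear_iso phi ->
  baric_iso mul w (@Kmul K nu) (@Kweight K nu).
Proof.
move=> wp sw [a wa] [lphi [phi' phiK phi'K]].
have phi'a : phi' a != 0.
  by apply: contraNneq wa => a0; rewrite -[a]phi'K a0 (lin0 lphi) scal0.
have [psi [[lpsi [psi' psiK psi'K]] wpsi]] :
    exists psi, linear_iso psi /\ forall y, w (phi (psi y)) = @Kweight K nu y.
  have sw_phi : scalar (fun y => w (phi y)) by move=> k x y; rewrite lphi sw.
  apply: (forms_conjugate (@Kweight_scalar K nu) sw_phi).
    exact: Kweight_nonzero phi'a.
  by exists (phi' a); rewrite phi'K.
pose g x := phi (psi x); pose f a := psi' (phi' a).
have fK : cancel f g by move=> b; rewrite /g /f psi'K phi'K.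
have gK : cancel g f by move=> x; rewrite /g /f phiK psiK.
have lg : linear g by move=> k x y; rewrite /g lpsi lphi.
exists f; split.
- by exists g.
- exact: linear_can lg gK fK.
- move=> b c; apply: (can_inj gK); rewrite /Kmul (linZ _ _ lg) !fK wp.
  by rewrite -{1}(fK c) wpsi.
- by move=> b; rewrite -wpsi -/(g _) fK.
Qed.

Lemma weight_one A (mul : A -> A -> A) w : is_weight mul w -> exists y, w y = 1.
Proof. by case=> sw _ [a wa]; exists ((w a)^-1 *: a); rewrite scalZ // mulVf. Qed.

Lemma bilinear_mul0 A (mul : A -> A -> A) :
  bilinear_mul mul -> (forall c, mul 0 c = 0) /\ (forall c, mul c 0 = 0).
Proof.
case=> ml mr; split=> c; first exact: (lin0 (f := mul^~ c) (fun k a b => ml k a b c)).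
exact: (lin0 (f := mul c) (fun k a b => mr k a b c)).
Qed.
End WeightProduct.

Section Bowtie.
Variables (K : fieldType) (A1 A2 : lmodType K).
Variables (mul1 : A1 -> A1 -> A1) (w1 : A1 -> K) (mul2 : A2 -> A2 -> A2) (w2 : A2 -> K).

Lemma bow_weight_scalar : scalar w1 -> scalar w2 -> scalar (bow_weight w1 w2).
Proof. by move=> s1 s2 k x y; rewrite /bow_weight s1 s2 mulrDr addrACA. Qed.

Lemma bow_weight_product : weight_product mul1 w1 -> weight_product mul2 w2 ->
  weight_product (bow_mul mul1 w1 mul2 w2) (bow_weight w1 w2).
Proof.
move=> wp1 wp2 x y; rewrite /bow_mul /bow_weight wp1 wp2 !scalerDl.
by apply: injective_projections => /=; rewrite addrC.
Qed.

(* Associativity of A1 bowtie A2 forces a b = w_i(b) a in each factor: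
   compare ((a,0)(0,y2))(b,0) with (a,0)((0,y2)(b,0)) for w2(y2) = 1, and
   symmetrically with some y1 of weight 1. *)
Lemma assoc_bow_weight_product : bilinear_mul mul1 -> bilinear_mul mul2 ->
  is_weight mul1 w1 -> is_weight mul2 w2 ->
  associative_mul (bow_mul mul1 w1 mul2 w2) ->
  weight_product mul1 w1 /\ weight_product mul2 w2.
Proof.
move=> bm1 bm2 hw1 hw2 assoc.
have [y1 wy1] := weight_one hw1; have [y2 wy2] := weight_one hw2.
have [[s1 _ _] [s2 _ _]] := (hw1, hw2).
have [m01 m10] := bilinear_mul0 bm1; have [m02 m20] := bilinear_mul0 bm2.
split=> a b.
- have := congr1 fst (assoc (a, 0) (0, y2) (b, 0)); rewrite /bow_mul /=.
  by rewrite !(m01, m10, m02, m20, scal0 s1, scal0 s2, scaler0, scale0r, addr0, add0r,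
               wy2, scale1r, scalZ _ _ s2, mulr1).
- have := congr1 snd (assoc (0, a) (y1, 0) (0, b)); rewrite /bow_mul /=.
  by rewrite !(m01, m10, m02, m20, scal0 s1, scal0 s2, scaler0, scale0r, addr0, add0r,
               wy1, scale1r, scalZ _ _ s1, mulr1).
Qed.
End Bowtie.

Unset Implicit Arguments.
Theorem corollary6p1 (K : fieldType) (hK : [pchar K] =i pred0)
    (A1 A2 : lmodType K)
    (mul1 : A1 -> A1 -> A1) (w1 : A1 -> K)
    (mul2 : A2 -> A2 -> A2) (w2 : A2 -> K)
    (hm1 : bilinear_mul mul1) (hw1 : is_weight mul1 w1)
    (hm2 : bilinear_mul mul2) (hw2 : is_weight mul2 w2)
    (nu1 nu2 : cnum) (hd1 : has_dim A1 nu1) (hd2 : has_dim A2 nu2) :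
  (associative_mul (bow_mul mul1 w1 mul2 w2) <->
     baric_iso mul1 w1 (@Kmul K nu1) (@Kweight K nu1) /\
     baric_iso mul2 w2 (@Kmul K nu2) (@Kweight K nu2)) /\
  (associative_mul (bow_mul mul1 w1 mul2 w2) ->
     baric_iso (bow_mul mul1 w1 mul2 w2) (bow_weight w1 w2)
               (@Kmul K (cadd nu1 nu2)) (@Kweight K (cadd nu1 nu2))).
Proof.
have [[s1 _ nz1] [s2 _ nz2]] := (hw1, hw2).
have [phi1 iso1] := Kbow_iso_of_dim hd1; have [phi2 iso2] := Kbow_iso_of_dim hd2.
have forms := assoc_bow_weight_product hm1 hm2 hw1 hw2.
split; first split.
- case/forms=> wp1 wp2.
  by split; [apply: weight_product_iso iso1 | apply: weight_product_iso iso2].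
- case=> /iso_weight_product wp1 /iso_weight_product wp2.
  exact/(weight_product_assoc (bow_weight_scalar s1 s2))/bow_weight_product.
- case/forms=> wp1 wp2; have [phi iso] := Kbow_iso_of_dim_pair hd1 hd2.
  apply: (weight_product_iso (bow_weight_product wp1 wp2) (bow_weight_scalar s1 s2) _ iso).
  by have [a wa] := nz1; exists (a, 0); rewrite /bow_weight scal0 // addr0.
Qed.
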